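(* Let $\mathbf{M}\in\mathcal{M}_T(n)$ with $\mathbf{M}\neq 0$. Set $\sigma=\|\mathbf{M}\hat{\mathbf{1}}\|_2$ and $\hat{\mathbf{u}}=\mathbf{M}\hat{\mathbf{1}}/\|\mathbf{M}\hat{\mathbf{1}}\|_2$. Then $\hat{\mathbf{u}}$ and $\hat{\mathbf{1}}$ are orthonormal and $\mathbf{M}=\sigma\,(\hat{\mathbf{u}},-\hat{\mathbf{1}})(\hat{\mathbf{1}},\hat{\mathbf{u}})^\top$, which is a singular value decomposition of $\mathbf{M}$ with both nonzero singular values equal to $\sigma$.
   Context: $\hat{\mathbf{1}}=(1,\dots,1)^\top/\sqrt{n}\in\mathbb{R}^n$; $(\mathbf{a},\mathbf{b})$ denotes the $n\times 2$ matrix with columns $\mathbf{a},\mathbf{b}$. A TDOA matrix is an $n\times n$ real matrix whose $(i,j)$ entry is $\tau_i-\tau_j$ for some $(\tau_1,\dots,\tau_n)\in\mathbb{R}^n$; $\mathcal{M}_T(n)$ is the set of all $n\times n$ TDOA matrices. *)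

From mathcomp Require Import all_boot all_order all_algebra.
Set Implicit Arguments. Unset Strict Implicit. Unset Printing Implicit Defensive.
Import Order.TTheory GRing.Theory Num.Theory.
Local Open Scope ring_scope.

Definition is_tdoa (R : ringType) (n : nat) (M : 'M[R]_n) : Prop :=
  exists tau : 'I_n -> R, forall i j : 'I_n, M i j = tau i - tau j.

Definition norm2 (R : rcfType) (n : nat) (v : 'cV[R]_n) : R :=
  Num.sqrt (\sum_(i < n) v i 0 ^+ 2).

Definition one_hat (R : rcfType) (n : nat) : 'cV[R]_n :=
  (Num.sqrt (n%:R))^-1 *: const_mx 1.

(** A TDOA matrix is [t 1^T - 1 t^T]; rescaling [1] to the unit vector [e = 1hat]
    gives [M = a e^T - e a^T].  For such a skew matrix [w := M e] is orthogonal to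
    [e] and [M = w e^T - e w^T], so normalising [w] to [u] yields
    [M = sigma (u e^T - e u^T) = sigma (u, -e)(e, u)^T] with orthonormal columns
    on both sides. *)
From mathcomp Require Import all_boot all_order all_algebra.
Import Order.TTheory GRing.Theory Num.Theory.

Set Implicit Arguments.
Unset Strict Implicit.
Local Open Scope ring_scope.

Section InnerProducts.

Variables (R : comNzRingType) (n : nat).
Implicit Types (x y a e : 'cV[R]_n) (M : 'M[R]_n).

Lemma trmx_mul_cV x y : x^T *m y = (\sum_i x i 0 * y i 0)%:M.
Proof.
apply/matrixP => i j; rewrite !ord1 !mxE eqxx mulr1n.
by apply: eq_bigr => k _; rewrite mxE.
Qed.

Lemma trmx_mul_cVC x y : x^T *m y = y^T *m x.
Proof.
by rewrite !trmx_mul_cV; congr (_%:M); apply: eq_bigr => i _; rewrite mulrC.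
Qed.

Lemma row_mx_orthonormal x y :
  x^T *m x = 1%:M -> y^T *m y = 1%:M -> x^T *m y = 0 ->
  (row_mx x y)^T *m row_mx x y = 1%:M.
Proof.
move=> xx yy xy; have yx : y^T *m x = 0 by rewrite trmx_mul_cVC.
by rewrite tr_row_mx mul_col_mx !mul_mx_row xx yy xy yx scalar_mx_block.
Qed.

Lemma tdoa_outer M :
  is_tdoa M -> exists t : 'cV[R]_n, M = t *m (const_mx 1)^T - const_mx 1 *m t^T.
Proof.
move=> [tau Mtau]; exists (\col_i tau i); apply/matrixP => i j.
by rewrite Mtau !mxE !big_ord1 !mxE mulr1 mul1r.
Qed.

(* [M e = a - e (a^T e)]: it differs from [a] only along [e], which the skew
   form [a e^T - e a^T] does not see. *)
Lemma skew_outer_decomp a e M :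
  e^T *m e = 1%:M -> M = a *m e^T - e *m a^T ->
  e^T *m (M *m e) = 0 /\ M = (M *m e) *m e^T - e *m (M *m e)^T.
Proof.
move=> ee ->; set k := a^T *m e.
have ae : a *m e^T *m e = a by rewrite -mulmxA ee mulmx1.
have ea : e *m a^T *m e = e *m k by rewrite -mulmxA.
have kT : k^T = k by rewrite [k]mx11_scalar tr_scalar_mx.
rewrite mulmxBl ae ea; split.
  by rewrite mulmxBr mulmxA ee mul1mx /k trmx_mul_cVC subrr.
rewrite raddfB /= trmx_mul kT mulmxBl.
by rewrite -[e *m k *m _]mulmxA mulmxBr opprB addrA subrK.
Qed.

End InnerProducts.

Section EuclideanNorm.

Variables (R : rcfType) (n : nat).
Implicit Types x : 'cV[R]_n.

Lemma norm2E x : norm2 x = Num.sqrt ((x^T *m x) 0 0).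
Proof. by rewrite trmx_mul_cV mxE mulr1n /norm2; under eq_bigr do rewrite expr2. Qed.

Lemma norm2_unit x : x^T *m x = 1%:M -> norm2 x = 1.
Proof. by rewrite norm2E => ->; rewrite mxE mulr1n sqrtr1. Qed.

Lemma norm2_gt0 x : x != 0 -> 0 < norm2 x.
Proof.
move=> x0; rewrite norm2E trmx_mul_cV mxE mulr1n sqrtr_gt0 lt0r.
have sq_ge0 i : 0 <= x i 0 * x i 0 by rewrite -expr2 sqr_ge0.
rewrite sumr_ge0 ?andbT //; apply: contra x0 => /eqP/psumr_eq0P x2_0.
apply/eqP/matrixP => i j; rewrite ord1 mxE; apply/eqP.
by rewrite -sqrf_eq0 expr2 x2_0.
Qed.

Lemma normalize_unit x :
  x != 0 -> let u := (norm2 x)^-1 *: x in u^T *m u = 1%:M.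
Proof.
move=> x0 u; have nx0 : norm2 x != 0 by rewrite gt_eqF ?norm2_gt0.
have xx : x^T *m x = (norm2 x ^+ 2)%:M.
  rewrite [LHS]mx11_scalar norm2E sqr_sqrtr // trmx_mul_cV mxE mulr1n.
  by rewrite sumr_ge0 // => i _; rewrite -expr2 sqr_ge0.
rewrite /u !linearZ /= -scalemxAl scalerA xx scale_scalar_mx.
by rewrite -expr2 exprVn mulVf // expf_neq0.
Qed.

Lemma one_hat_unit : (0 < n)%N -> (one_hat R n)^T *m one_hat R n = 1%:M.
Proof.
move=> n_gt0; rewrite trmx_mul_cV; congr (_%:M).
under eq_bigr do rewrite !mxE mulr1 -expr2.
rewrite sumr_const card_ord exprVn sqr_sqrtr ?ler0n //.
by rewrite -[LHS]mulr_natl mulfV // pnatr_eq0 -lt0n.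
Qed.

Lemma const_mx1_one_hat :
  (0 < n)%N -> const_mx 1 = Num.sqrt (n%:R : R) *: one_hat R n.
Proof.
move=> n_gt0; rewrite /one_hat scalerA divff ?scale1r //.
by rewrite gt_eqF // sqrtr_gt0 ltr0n.
Qed.

End EuclideanNorm.

Theorem lemma1 (R : rcfType) (n : nat) (M : 'M[R]_n) :
  is_tdoa M -> M != 0 ->
  let e := one_hat R n in
  let sigma := norm2 (M *m e) in
  let u := sigma^-1 *: (M *m e) in
  let U := row_mx u (- e) in
  let V := row_mx e u in
  (* hat u and hat 1 are orthonormal *)
  [/\ norm2 u = 1, norm2 e = 1 & u^T *m e = 0] /\
  (* M = sigma (u, -1hat)(1hat, u)^T *)
  M = sigma *: (U *m V^T) /\
  (* this is a (thin) SVD: orthonormal columns, singular values sigma, sigma > 0 *)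
  [/\ U^T *m U = 1%:M, V^T *m V = 1%:M, 0 < sigma &
      M = U *m (sigma%:M : 'M_(1 + 1)) *m V^T].
Proof.
move=> tdoaM M0; have n_gt0 : (0 < n)%N.
  by case: n M tdoaM M0 => // M _; rewrite flatmx0 eqxx.
move=> e sigma u U V; have ee : e^T *m e = 1%:M := one_hat_unit R n_gt0.
have e1 : const_mx 1 = Num.sqrt (n%:R : R) *: e := const_mx1_one_hat R n_gt0.
clearbody e; have [t Mt] := tdoa_outer tdoaM.
set a := Num.sqrt (n%:R : R) *: t; have Ma : M = a *m e^T - e *m a^T.
  by rewrite Mt e1 /a !linearZ /= -!scalemxAl scalerN.
have [ew Mw] := skew_outer_decomp ee Ma.
set w := M *m e in ew Mw sigma u U V *.
have w0 : w != 0.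
  by apply: contraNneq M0 => w0; rewrite Mw w0 mul0mx trmx0 mulmx0 subrr.
have sigma_gt0 : 0 < sigma := norm2_gt0 w0.
have uu : u^T *m u = 1%:M := normalize_unit w0.
have ue : u^T *m e = 0 by rewrite linearZ /= -scalemxAl trmx_mul_cVC ew scaler0.
have eu : e^T *m u = 0 by rewrite trmx_mul_cVC.
have wu : w = sigma *: u by rewrite /u scalerA divff ?gt_eqF ?scale1r.
clearbody u.
have UV : U *m V^T = u *m e^T - e *m u^T by rewrite tr_row_mx mul_row_col mulNmx.
have MUV : M = sigma *: (U *m V^T).
  by rewrite UV {1}Mw wu linearZ /= -scalemxAl -scalemxAr scalerBr.
split; first by rewrite !norm2_unit.
split=> //; split=> //.
- by apply: row_mx_orthonormal; rewrite ?linearN /= ?mulNmx ?mulmxN ?opprK ?ue ?oppr0.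
- exact: row_mx_orthonormal.
- by rewrite mul_mx_scalar -scalemxAl.
Qed.
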